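(* Let $\mathcal E_i\equiv1\to H_i\xrightarrow{\alpha_i}G_i\xrightarrow{\beta_i}K_i\to1$ ($i=1,2$) be central extensions of multiplicative Lie algebras and $(\lambda,\mu,\nu)$ an isoclinic morphism from $\mathcal E_1$ to $\mathcal E_2$. Then $\ker\mu\cap{}^M[G_1,G_1]=1$ and $\mu(G_1)\,\alpha_2(H_2)=G_2$.
   Context: A multiplicative Lie algebra is a group $(G,\cdot)$ with a binary operation $\star$ such that for all $x,y,z\in G$: $x\star x=1$; $x\star(yz)=(x\star y)\,{}^y(x\star z)$; $(xy)\star z={}^x(y\star z)(x\star z)$; $((x\star y)\star{}^yz)((y\star z)\star{}^zx)((z\star x)\star{}^xy)=1$; ${}^z(x\star y)={}^zx\star{}^zy$, where ${}^xy=xyx^{-1}$. Homomorphisms preserve both operations. $Z(G)$ is the group center, $LZ(G)=\{x: x\star y=1\ \forall y\}$, $\mathcal Z(G)=LZ(G)\cap Z(G)$; $[x,y]$ is the group commutator; ${}^M[G,G]=(G\star G)[G,G]$ with $G\star G$ the ideal generated by all $a\star b$. A central extension is a short exact sequence $1\to H\xrightarrow{\alpha}G\xrightarrow{\beta}K\to1$ of multiplicative Lie algebras with $\alpha(H)\subseteq\mathcal Z(G)$. A morphism $(\lambda,\mu,\nu)$ from $\mathcal E_1$ to $\mathcal E_2$ consists of homomorphisms $\lambda:H_1\to H_2$, $\mu:G_1\to G_2$, $\nu:K_1\to K_2$ with $\mu\alpha_1=\alpha_2\lambda$, $\beta_2\mu=\nu\beta_1$. It is an isoclinic morphism if $\nu$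 and $\mu|_{{}^M[G_1,G_1]}:{}^M[G_1,G_1]\to{}^M[G_2,G_2]$ are isomorphisms such that $\mu([g,g'])=[h,h']$ and $\mu(g\star g')=h\star h'$ whenever $g,g'\in G_1$, $h,h'\in G_2$ with $\beta_2(h)=\nu\beta_1(g)$, $\beta_2(h')=\nu\beta_1(g')$. *)

Record MLA := {
  carrier :> Type;
  mul : carrier -> carrier -> carrier;
  inv : carrier -> carrier;
  one : carrier;
  star : carrier -> carrier -> carrier;
  mulA : forall x y z, mul x (mul y z) = mul (mul x y) z;
  mul1g : forall x, mul one x = x;
  mulg1 : forall x, mul x one = x;
  mulVg : forall x, mul (inv x) x = one;
  mulgV : forall x, mul x (inv x) = one;
  star_xx : forall x, star x x = one;
  star_mulr : forall x y z,
      star x (mul y z) = mul (star x y) (mul y (mul (star x z) (inv y)));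
  star_mull : forall x y z,
      star (mul x y) z = mul (mul x (mul (star y z) (inv x))) (star x z);
  star_jacobi : forall x y z,
      mul (mul (star (star x y) (mul y (mul z (inv y))))
               (star (star y z) (mul z (mul x (inv z)))))
          (star (star z x) (mul x (mul y (inv x)))) = one;
  star_conj : forall x y z,
      mul z (mul (star x y) (inv z))
      = star (mul z (mul x (inv z))) (mul z (mul y (inv z)))
}.

Arguments mul {m}.
Arguments inv {m}.
Arguments one {m}.
Arguments star {m}.

Definition conjg {G : MLA} (x y : G) : G := mul x (mul y (inv x)).
Definition commg {G : MLA} (x y : G) : G := mul (mul x y) (mul (inv x) (inv y)).

Definition is_hom {G K : MLA} (f : G -> K) : Prop :=
  (forall x y, f (mul x y) = mul (f x) (f y)) /\
  (forall x y, f (star x y) = star (f x) (f y)).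

Definition in_Z {G : MLA} (x : G) : Prop := forall y : G, mul x y = mul y x.
Definition in_LZ {G : MLA} (x : G) : Prop := forall y : G, star x y = one.
Definition in_calZ {G : MLA} (x : G) : Prop := in_LZ x /\ in_Z x.

Definition is_subgroup {G : MLA} (S : G -> Prop) : Prop :=
  S one /\ (forall x y, S x -> S y -> S (mul x y)) /\ (forall x, S x -> S (inv x)).
Definition is_ideal {G : MLA} (I : G -> Prop) : Prop :=
  is_subgroup I /\ (forall x g, I x -> I (conjg g x)) /\
  (forall x g, I x -> I (star x g)).

Definition in_starGG {G : MLA} (x : G) : Prop :=
  forall I : G -> Prop, is_ideal I -> (forall a b : G, I (star a b)) -> I x.
Definition in_commGG {G : MLA} (x : G) : Prop :=
  forall S : G -> Prop, is_subgroup S -> (forall a b : G, S (commg a b)) -> S x.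
(* ^M[G,G] = (G * G)[G,G] *)
Definition in_MGG {G : MLA} (x : G) : Prop :=
  exists a b, in_starGG a /\ in_commGG b /\ x = mul a b.

Definition central_extension {H G K : MLA} (alpha : H -> G) (beta : G -> K) : Prop :=
  is_hom alpha /\ is_hom beta /\
  (forall h h', alpha h = alpha h' -> h = h') /\
  (forall k, exists g, beta g = k) /\
  (forall g, beta g = one <-> exists h, alpha h = g) /\
  (forall h, in_calZ (alpha h)).

Definition ext_morphism {H1 G1 K1 H2 G2 K2 : MLA}
  (alpha1 : H1 -> G1) (beta1 : G1 -> K1) (alpha2 : H2 -> G2) (beta2 : G2 -> K2)
  (lambda : H1 -> H2) (mu : G1 -> G2) (nu : K1 -> K2) : Prop :=
  is_hom lambda /\ is_hom mu /\ is_hom nu /\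
  (forall h, mu (alpha1 h) = alpha2 (lambda h)) /\
  (forall g, beta2 (mu g) = nu (beta1 g)).

Definition isoclinic_morphism {H1 G1 K1 H2 G2 K2 : MLA}
  (alpha1 : H1 -> G1) (beta1 : G1 -> K1) (alpha2 : H2 -> G2) (beta2 : G2 -> K2)
  (lambda : H1 -> H2) (mu : G1 -> G2) (nu : K1 -> K2) : Prop :=
  ext_morphism alpha1 beta1 alpha2 beta2 lambda mu nu /\
  (forall k k', nu k = nu k' -> k = k') /\ (forall k2, exists k1, nu k1 = k2) /\
  (forall g, in_MGG g -> in_MGG (mu g)) /\
  (forall g g', in_MGG g -> in_MGG g' -> mu g = mu g' -> g = g') /\
  (forall y, in_MGG y -> exists g, in_MGG g /\ mu g = y) /\
  (forall (g g' : G1) (h h' : G2),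
      beta2 h = nu (beta1 g) -> beta2 h' = nu (beta1 g') ->
      mu (commg g g') = commg h h' /\ mu (star g g') = star h h').


(* Both claims only use the underlying group homomorphisms.  An injective
   homomorphism on a subset containing [one] has trivial kernel there.  Since
   [nu] and [beta1] are onto, every [g2] has the same [beta2]-image as some
   [mu g1]; then [(mu g1)^-1 g2] lies in [ker beta2 = alpha2 H2]. *)

Section GroupFacts.

Variable G : MLA.
Implicit Types x y : G.

Lemma mulKg x y : mul x (mul (inv x) y) = y.
Proof. now rewrite mulA, mulgV, mul1g. Qed.

Lemma mulVKg x y : mul (inv x) (mul x y) = y.
Proof. now rewrite mulA, mulVg, mul1g. Qed.

Lemma mulg_idem_eq1 x : mul x x = x -> x = one.
Proof. intros Hxx. now rewrite <- (mulVKg x x), Hxx, mulVg. Qed.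

Lemma in_MGG1 : @in_MGG G one.
Proof.
  exists one, one. split; [|split].
  - intros I [[I1 _] _] _. exact I1.
  - intros S [S1 _] _. exact S1.
  - symmetry. apply mulg1.
Qed.

End GroupFacts.

Section Homomorphisms.

Variables G K : MLA.
Variable f : G -> K.
Hypothesis f_hom : is_hom f.

Lemma hom1 : f one = one.
Proof.
  destruct f_hom as [fM _].
  apply mulg_idem_eq1. now rewrite <- fM, mulg1.
Qed.

Lemma homV x : f (inv x) = inv (f x).
Proof.
  destruct f_hom as [fM _].
  rewrite <- (mulg1 K (f (inv x))), <- (mulgV K (f x)), mulA, <- fM, mulVg, hom1.
  apply mul1g.
Qed.

Lemma hom_eq_ker x y : f x = f y -> f (mul (inv x) y) = one.
Proof.
  intros Efxy. destruct f_hom as [fM _].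
  now rewrite fM, homV, Efxy, mulVg.
Qed.

Lemma hom_injective_on_ker (S : G -> Prop) :
  S one -> (forall x y, S x -> S y -> f x = f y -> x = y) ->
  forall x, f x = one -> S x -> x = one.
Proof.
  intros S1 f_inj x fx1 Sx. apply f_inj; [exact Sx | exact S1 |].
  now rewrite fx1, hom1.
Qed.

End Homomorphisms.

Lemma image_mul_ker_full (G1 K1 H2 G2 K2 : MLA)
  (beta1 : G1 -> K1) (alpha2 : H2 -> G2) (beta2 : G2 -> K2)
  (mu : G1 -> G2) (nu : K1 -> K2) :
  is_hom beta2 ->
  (forall k1, exists g1, beta1 g1 = k1) ->
  (forall k2, exists k1, nu k1 = k2) ->
  (forall g1, beta2 (mu g1) = nu (beta1 g1)) ->
  (forall g2, beta2 g2 = one -> exists h2, alpha2 h2 = g2) ->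
  forall g2, exists g1 h2, g2 = mul (mu g1) (alpha2 h2).
Proof.
  intros beta2_hom beta1_onto nu_onto square ker_beta2 g2.
  destruct (nu_onto (beta2 g2)) as [k1 Ek1].
  destruct (beta1_onto k1) as [g1 Eg1].
  assert (Ebeta : beta2 (mu g1) = beta2 g2) by now rewrite square, Eg1, Ek1.
  destruct (ker_beta2 _ (hom_eq_ker _ _ _ beta2_hom _ _ Ebeta)) as [h2 Eh2].
  exists g1, h2. now rewrite Eh2, mulKg.
Qed.

Theorem corollary4p6 (H1 G1 K1 H2 G2 K2 : MLA)
  (alpha1 : H1 -> G1) (beta1 : G1 -> K1)
  (alpha2 : H2 -> G2) (beta2 : G2 -> K2)
  (lambda : H1 -> H2) (mu : G1 -> G2) (nu : K1 -> K2) :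
  central_extension alpha1 beta1 ->
  central_extension alpha2 beta2 ->
  isoclinic_morphism alpha1 beta1 alpha2 beta2 lambda mu nu ->
  (forall g : G1, mu g = one -> in_MGG g -> g = one) /\
  (forall g2 : G2, exists (g1 : G1) (h2 : H2), g2 = mul (mu g1) (alpha2 h2)).
Proof.
  intros [_ [_ [_ [beta1_onto _]]]] [_ [beta2_hom [_ [_ [ker_beta2 _]]]]]
    [[_ [mu_hom [_ [_ square]]]] [_ [nu_onto [_ [mu_inj_MGG _]]]]].
  split.
  - exact (hom_injective_on_ker _ _ _ mu_hom _ (in_MGG1 G1) mu_inj_MGG).
  - apply (image_mul_ker_full _ _ _ _ _ beta1 alpha2 beta2 mu nu); auto.
    intros g2. apply ker_beta2.
Qed.
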